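(* In the blocking model with S-phase $S=[s,t]$ of length $|S|=t-s$, no more than $\lceil |S|^{-1}\rceil$ critical clusters can persist.
   Context: Cell cycle model: each of finitely many cells has a position $x_i\in[0,1)$ on the normalized cell cycle, viewed as a circle (reaching $1$ means division and restart at $0$; the population is fixed). There is a responsive interval $R=[r,s]$ preceding the S-phase $S=[s,t]$, $0\le r<s<t\le1$. Blocking model with threshold $\tau>0$: all cells move with $dx_i/dt=1$, except that whenever the number of cells in $S$ is at least $\tau$, cells arriving at $s$ are stopped there (blocked from entering $S$) until the number of cells in $S$ drops below $\tau$, at which moment all cells accumulated at $s$ enter $S$ together. A cluster is a group of cells occupying the same position (synchronized); it is critical if it contains at least $\tau$ cells. A critical cluster persists if it continues to exist for all future time along the trajectory. *)

From HB Require Import structures.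
From mathcomp Require Import all_boot all_order all_algebra.
From mathcomp Require Import reals.
Set Implicit Arguments. Unset Strict Implicit. Unset Printing Implicit Defensive.
Import Order.TTheory GRing.Theory Num.Theory.
Local Open Scope ring_scope.

(* A trajectory is given by lifted (unwrapped)
   phases  y i : R -> R  (time |-> lifted phase); the position of cell i on
   the normalized cell cycle (the circle [0,1)) is the fractional part
   pos (y i T).  Reaching 1 = division and restart at 0. *)

Section Blocking.
Variable R : realType.

Definition pos (v : R) : R := v - (Num.floor v)%:~R.

Variable n : nat.

(* number of cells inside the S-phase at time T.  Cells waiting (blocked)
   at s, or just exiting at t, are not counted: we count positions in the
   open interval (s, t). *)
Definition nS (s t : R) (y : 'I_n -> R -> R) (T : R) : nat :=
  #|[set j : 'I_n | (s < pos (y j T)) && (pos (y j T) < t)]|.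

Definition blocked (tau s t : R) (y : 'I_n -> R -> R) (i : 'I_n) (T : R) : bool :=
  (pos (y i T) == s) && (tau <= (nS s t y T)%:R).

Definition rate (tau s t : R) (y : 'I_n -> R -> R) (i : 'I_n) (T : R) : R :=
  if blocked tau s t y i T then 0 else 1.

Definition blocking_traj (tau s t : R) (y : 'I_n -> R -> R) : Prop :=
  (forall (i : 'I_n) (T : R), 0 < T ->
     forall e : R, 0 < e -> exists2 d : R, 0 < d &
       forall u : R, `|u - T| < d -> `|y i u - y i T| < e) /\
  (forall (i : 'I_n) (T : R), 0 <= T ->
     exists2 d : R, 0 < d &
       forall h : R, 0 < h -> h < d -> y i (T + h) = y i T + h * rate tau s t y i T).

Definition is_cluster (y : 'I_n -> R -> R) (C : {set 'I_n}) (T : R) : Prop :=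
  C != set0 /\ forall i j : 'I_n, i \in C -> j \in C -> pos (y i T) = pos (y j T).

Definition critical_cluster (tau : R) (y : 'I_n -> R -> R) (C : {set 'I_n}) (T : R) : Prop :=
  is_cluster y C T /\ tau <= (#|C|)%:R.

End Blocking.

From HB Require Import structures.
From mathcomp Require Import all_boot all_order all_algebra.
From mathcomp Require Import boolp classical_sets reals.
From mathcomp Require Import lra zify.
Import Order.TTheory GRing.Theory Num.Theory.
Local Open Scope ring_scope.
Set Implicit Arguments. Unset Strict Implicit. Unset Printing Implicit Defensive.

(* A cluster that enters S (sits at s with rate 1) keeps moving freely for a
   whole period, so for the following time t - s the entire critical cluster
   lies inside S and blocks every other cluster at s: distinct clusters enter
   S at times at least t - s apart.  On the other hand two persistent clusters
   never share a position, so the difference of their lifted phases never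
   crosses an integer; hence while one cluster runs through a full period,
   every other cluster must pass a lift of s, i.e. enter S.  Thus the k entry
   times following a first one fit in a window of length 1 with gaps t - s,
   and (k - 1)(t - s) < 1.  Some cluster does enter when k > 1: otherwise all
   of them would come to rest at s and coincide. *)

Section FractionalPart.
Variable R : realType.
Implicit Types (u v x h : R) (m : int).

Lemma pos_ge0 v : 0 <= pos v.
Proof. by rewrite /pos subr_ge0 floor_le. Qed.

Lemma pos_lt1 v : pos v < 1.
Proof. by have := floorD1_gt v; rewrite /pos intrD; lra. Qed.

Lemma posDz v m : pos (v + m%:~R) = pos v.
Proof. by rewrite /pos floorDrz ?intr_int // intrKfloor intrD; lra. Qed.

Lemma pos_id x : 0 <= x < 1 -> pos x = x.
Proof.
by move=> x01; rewrite /pos (@floor_def _ x 0) ?subr0 // add0r.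
Qed.

Lemma posD v h : 0 <= h -> pos v + h < 1 -> pos (v + h) = pos v + h.
Proof.
rewrite /pos => h0 h1; have := floor_le v => ?.
suff -> : Num.floor (v + h) = Num.floor v by lra.
by apply: floor_def; rewrite intrD; apply/andP; split; lra.
Qed.

Lemma pos_inj_window u v : pos u = pos v -> 0 <= v - u < 1 -> u = v.
Proof.
rewrite /pos => e /andP[d0 d1].
have dE : v - u = (Num.floor v - Num.floor u)%:~R by rewrite intrD intrN; lra.
have m0 : (0 <= Num.floor v - Num.floor u)%R by rewrite -(ler0z R) -dE.
have m1 : (Num.floor v - Num.floor u < 1)%R by rewrite -(ltr_int R) -dE.
have m00 : Num.floor v - Num.floor u = 0 by lia.
by move: dE; rewrite m00; lra.
Qed.

Lemma pos_add_pos_sub v x : 0 <= x < 1 -> pos (v + pos (x - v)) = x.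
Proof.
move=> x01; have -> : v + pos (x - v) = x + (- Num.floor (x - v))%:~R.
  by rewrite /pos intrN; lra.
by rewrite posDz pos_id.
Qed.

End FractionalPart.

Lemma nat_le_ceil_inv (R : archiRealFieldType) (k : nat) (L : R) : 0 < L ->
  (k.-1)%:R * L < 1 -> (k%:Z <= Num.ceil L^-1)%R.
Proof.
move=> L0 kL; have kLinv : (k.-1)%:R < L^-1 by rewrite -ltr_pdivlMr // mul1r in kL.
have : ((k.-1)%:Z < Num.ceil L^-1)%R.
  by rewrite -(ltr_int R); apply: lt_le_trans kLinv (ceil_ge _).
lia.
Qed.

Lemma separated_spread (R : realFieldType) (T : finType) (f : T -> R) (L x : R) (m : nat)
    (S : {set T}) : #|S| = m.+1 -> (forall a, a \in S -> x <= f a) ->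
  (forall a b, a \in S -> b \in S -> a != b -> f a <= f b -> f a + L <= f b) ->
  exists2 a, a \in S & x + m%:R * L <= f a.
Proof.
elim: m S => [|m IH] S cS lo sep; have [a aS] : exists a, a \in S.
- by apply/set0Pn; rewrite -card_gt0 cS.
- by exists a => //; rewrite mul0r addr0 lo.
- by apply/set0Pn; rewrite -card_gt0 cS.
have [b bS' bmax] := arg_maxP f aS; have bS : b \in S := bS'.
have cSb : #|S :\ b| = m.+1 by move: cS; rewrite (cardsD1 b) bS => -[].
have subS c : c \in S :\ b -> c \in S by case/setD1P.
have [c /setD1P[cb cS'] hc] := IH (S :\ b) cSb (fun c hc => lo c (subS c hc))
  (fun c c' hc hc' => sep c c' (subS c hc) (subS c' hc')).
have := sep c b cS' bS cb (bmax c cS').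
by exists b => //; rewrite mulrSr mulrDl mul1r; lra.
Qed.

Section ContinuousInduction.
Variable R : realType.
Implicit Types (a b c u v : R) (g : R -> R).

Lemma continuous_induction a b (P : R -> Prop) : a <= b -> P a ->
  (forall u, a <= u -> u < b -> (forall v, a <= v <= u -> P v) ->
     exists2 d, 0 < d & forall v, u <= v < u + d -> v <= b -> P v) ->
  (forall u, a < u -> u <= b -> (forall v, a <= v < u -> P v) -> P u) ->
  forall v, a <= v <= b -> P v.
Proof.
move=> ab Pa step close.
pose E : set R := fun u => a <= u <= b /\ forall v, a <= v <= u -> P v.
have Ea : E a.
  by split=> [|v /andP[? ?]]; [apply/andP; split | have -> : v = a by lra].
have supE : has_sup E by split; [exists a | exists b => u [/andP[]]].
set M := sup E.
have aM : a <= M by exact: sup_upper_bound.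
have Mb : M <= b by apply: ge_sup; [exists a | move=> u [/andP[]]].
have PM : forall v, a <= v <= M -> P v.
  have below v : a <= v -> v < M -> P v.
    move=> av vM; have [|w [_ Pw] vw] := @sup_adherent _ E (M - v) _ supE; first lra.
    by apply: Pw; rewrite /M in vw; apply/andP; split; lra.
  move=> v /andP[av vM]; have [vM'|] := ltrP v M; first exact: below.
  have [aM'|Ma] := ltrP a M => Mv; have -> : v = M by lra.
    by apply: close => // w /andP[]; apply: below.
  by have -> : M = a by lra.
move=> v /andP[av vb]; have [Mb'|] := ltrP M b; last by move=> bM; apply: PM; lra.
have [d d0 Pd] := step M aM Mb' PM.
pose w := Num.min (M + d / 2) b.
have Ew : E w.
  split=> [|x /andP[ax xw]]; first by rewrite le_min ge_min lexx orbT; lra.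
  have [xM|Mx] := lerP x M; first by apply: PM; lra.
  by apply: Pd; move: xw; rewrite le_min => /andP[? ?]; lra.
have := sup_upper_bound supE Ew; rewrite -/M /w ge_min => /orP[]; lra.
Qed.

Definition cont_on a b g := forall u, a <= u <= b -> forall e, 0 < e ->
  exists2 d, 0 < d & forall v, a <= v <= b -> `|v - u| < d -> `|g v - g u| < e.

Lemma cont_onN a b g : cont_on a b g -> cont_on a b (fun v => - g v).
Proof.
move=> cg u ui e e0; have [d d0 Hd] := cg u ui e e0.
by exists d => // v vi uv; rewrite -opprD normrN; apply: Hd.
Qed.

Lemma cont_onB a b g1 g2 : cont_on a b g1 -> cont_on a b g2 ->
  cont_on a b (fun v => g1 v - g2 v).
Proof.
move=> c1 c2 u ui e e0.
have [d1 d10 H1] := c1 u ui (e / 2) ltac:(lra).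
have [d2 d20 H2] := c2 u ui (e / 2) ltac:(lra).
exists (Num.min d1 d2) => [|v vi]; first by rewrite lt_min d10 d20.
rewrite lt_min => /andP[v1 v2]; have := H1 v vi v1; have := H2 v vi v2.
rewrite !ltr_norml => /andP[? ?] /andP[? ?]; apply/andP; split; lra.
Qed.

Lemma cont_on_affine a b p q c : cont_on a b (fun v => p + (v - q) * c).
Proof.
move=> u _ e e0; have c0 := normr_ge0 c.
exists (e / (`|c| + 1)) => [|v _ uv]; first by apply: divr_gt0; lra.
have -> : p + (v - q) * c - (p + (u - q) * c) = (v - u) * c by lra.
rewrite normrM.
have : `|v - u| * (`|c| + 1) < e by rewrite -ltr_pdivlMr //; lra.
nra.
Qed.

Lemma cont_on_le_left a b g u c : cont_on a b g -> a < u <= b ->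
  (forall v, a <= v < u -> g v <= c) -> g u <= c.
Proof.
move=> cg /andP[au ub] gc; rewrite leNgt; apply/negP => cu.
have [d d0 Hd] := cg u ltac:(lra) (g u - c) ltac:(lra).
pose v := u - Num.min d (u - a) / 2.
have : 0 < Num.min d (u - a) <= d by rewrite lt_min ge_min lexx d0; lra.
have : Num.min d (u - a) <= u - a by rewrite ge_min lexx orbT.
move=> m2 /andP[m0 m1].
have vu : `|v - u| < d by rewrite distrC /v ger0_norm; lra.
have := gc v ltac:(rewrite /v; lra).
have := Hd v ltac:(rewrite /v; lra) vu.
rewrite ltr_norml; lra.
Qed.

Lemma cont_on_lt a b g c : cont_on a b g -> a <= b -> g a < c ->
  (forall v, a <= v <= b -> g v != c) -> forall v, a <= v <= b -> g v < c.
Proof.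
move=> cg ab gac gNc; apply: continuous_induction => // [u au ub Pu|u au ub Pu].
  have gu : g u < c by apply: Pu; lra.
  have [d d0 Hd] := cg u ltac:(lra) (c - g u) ltac:(lra).
  exists d => // v /andP[uv vud] vb.
  have := Hd v ltac:(lra) ltac:(rewrite ger0_norm; lra).
  by rewrite ltr_norml; lra.
have gu : g u <= c by apply: (cont_on_le_left cg) => [|v /Pu /ltW]; [lra|].
by rewrite lt_neqAle gNc ?gu //; lra.
Qed.

End ContinuousInduction.

Section Trajectory.
Variables (R : realType) (n : nat) (tau s t : R) (y : 'I_n -> R -> R).
Hypotheses (s_ge0 : 0 <= s) (hst : s < t) (ht1 : t <= 1)
  (traj : blocking_traj tau s t y).
Implicit Types (i : 'I_n) (a b c e u v : R).

Local Notation rt := (rate tau s t y).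

Lemma rate01 i u : rt i u = 0 \/ rt i u = 1.
Proof. by rewrite /rate; case: ifP; auto. Qed.

Lemma rate_unblocked i u : pos (y i u) != s -> rt i u = 1.
Proof. by rewrite /rate /blocked => /negbTE ->. Qed.

Lemma traj_stepE i u : 0 <= u -> exists2 d, 0 < d &
  forall v, u < v < u + d -> y i v = y i u + (v - u) * rt i u.
Proof.
move=> u0; have [d d0 Hd] := traj.2 i u u0; exists d => // v /andP[uv vd].
by have := Hd (v - u) ltac:(lra) ltac:(lra); rewrite addrC subrK.
Qed.

Lemma traj_cont_on i a b : 0 <= a -> cont_on a b (y i).
Proof.
move=> a0 u /andP[au ub] e e0; have [u0|] := ltrP 0 u.
  (* [blocking_traj] grants continuity at positive times only; at 0 use the step. *)
  by have [d d0 Hd] := traj.1 i u u0 e e0; exists d => // v _; apply: Hd.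
move=> u0; have {u0 au} -> : u = 0 by lra.
have [d d0 Hd] := traj_stepE i (lexx 0).
exists (Num.min d e) => [|v /andP[av _]]; first by rewrite lt_min d0.
rewrite subr0 lt_min ger0_norm; last lra.
move=> /andP[vd ve]; have [->|v0] := eqVneq v 0; first by rewrite subrr normr0.
rewrite Hd; last lra.
have -> : y i 0 + (v - 0) * rt i 0 - y i 0 = v * rt i 0 by lra.
by case: (rate01 i 0) => ->; rewrite ?mulr0 ?normr0 // mulr1 ger0_norm //; lra.
Qed.

Lemma traj_affine i a b c : 0 <= a -> a <= b ->
  (forall u, a <= u < b -> y i u = y i a + (u - a) * c -> rt i u = c) ->
  forall v, a <= v <= b -> y i v = y i a + (v - a) * c.
Proof.
move=> a0 ab rc; apply: continuous_induction => // [|u au ub Pu|u au ub Pu].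
- by rewrite subrr mul0r addr0.
- have yu := Pu u ltac:(lra).
  have [d d0 Hd] := traj_stepE i (le_trans a0 au).
  exists d => // v /andP[uv vd] _; have [<-//|uv'] := eqVneq u v.
  have uvd : u < v < u + d by rewrite lt_neqAle uv' uv vd.
  rewrite Hd // rc ?yu //; first lra.
  by apply/andP; split; lra.
- pose g v := y i v - (y i a + (v - a) * c).
  have cg : cont_on a b g :=
    cont_onB (traj_cont_on i a0) (@cont_on_affine _ a b (y i a) a c).
  have g0 v : a <= v < u -> g v = 0 by move=> /Pu; rewrite /g => ->; rewrite subrr.
  have auc : a < u <= b by rewrite au ub.
  have gle : g u <= 0 by apply: (cont_on_le_left cg auc) => v /g0 ->.
  have gge : - g u <= 0.
    by apply: (cont_on_le_left (cont_onN cg) auc) => v /g0 ->; rewrite oppr0.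
  by move: gle gge; rewrite /g; lra.
Qed.

Lemma traj_free_run i e D : 0 <= e -> rt i e = 1 ->
  (forall h, 0 < h < D -> pos (y i e + h) != s) ->
  forall v, e <= v <= e + D -> y i v = y i e + (v - e).
Proof.
move=> e0 re nos v /andP[ev vD].
rewrite -[v - e]mulr1.
apply: (traj_affine e0 (b := e + D)) => [|u /andP[eu uD]|]; try lra.
  rewrite mulr1 => yu; have [<-//|ue] := eqVneq e u.
  have eu' : e < u by rewrite lt_neqAle ue.
  by rewrite rate_unblocked // yu nos //; lra.
Qed.

Lemma traj_free_cycle i e : 0 <= e -> pos (y i e) = s -> rt i e = 1 ->
  forall v, e <= v <= e + 1 -> y i v = y i e + (v - e).
Proof.
move=> e0 pe re; apply: traj_free_run => // h /andP[h0 h1]; apply/eqP => peh.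
have hw : 0 <= y i e + h - y i e < 1 by apply/andP; split; lra.
by have := @pos_inj_window _ _ _ (etrans pe (esym peh)) hw; lra.
Qed.

Lemma traj_reaches_s i T : 0 <= T -> exists2 d, 0 <= d < 1 & pos (y i (T + d)) = s.
Proof.
move=> T0; have s01 : 0 <= s < 1 by rewrite s_ge0 (lt_le_trans hst ht1).
have ps := pos_add_pos_sub (y i T) s01; set d := pos (s - y i T) in ps.
have d01 : 0 <= d < 1 by rewrite pos_ge0 pos_lt1.
exists d => //; have [d0|dpos] := eqVneq d 0.
  by move: ps; rewrite d0 !addr0.
have hit h : 0 <= h <= d -> pos (y i T + h) = s -> h = d.
  move=> hd ph; have hw : 0 <= y i T + d - (y i T + h) < 1 by apply/andP; split; lra.
  by have := @pos_inj_window _ _ _ (etrans ph (esym ps)) hw; lra.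
have rT : rt i T = 1.
  apply: rate_unblocked; apply: contra_neq dpos => pT.
  by rewrite -(hit 0) ?addr0 // lexx; case/andP: d01.
rewrite (@traj_free_run i T d) // => [|h hd|]; last first.
- by case/andP: d01 => ? _; apply/andP; split; lra.
- by apply/eqP => /(hit h); case/andP: hd => *; lra.
- by rewrite (addrC T) addrK.
Qed.

Lemma traj_enters i a b c : 0 <= a -> a <= b -> y i a <= c -> c < y i b ->
  exists u, [/\ a <= u, u < b, y i u = c & rt i u = 1].
Proof.
move=> a0 ab yac ybc; apply: contrapT => noentry.
have [[u /andP[au ub] yu]|nohit] := pselect (exists2 u, a <= u <= b & y i u = c).
  have rest w : u <= w <= b -> y i w = c.
    have stuck v : u <= v < b -> y i v = y i u + (v - u) * 0 -> rt i v = 0.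
      rewrite mulr0 addr0 yu => /andP[uv vb] yv; case: (rate01 i v) => // rv.
      by exfalso; apply: noentry; exists v; split => //; lra.
    by move=> wi; rewrite (traj_affine (le_trans a0 au) ub stuck wi) mulr0 addr0.
  have := rest b; rewrite ub lexx => /(_ isT); lra.
have [yac'|cya] := ltrP (y i a) c; last first.
  by exfalso; apply: nohit; exists a; [rewrite lexx ab | lra].
have yNc v : a <= v <= b -> y i v != c.
  by move=> vi; apply/eqP => yv; apply: nohit; exists v.
have := cont_on_lt (traj_cont_on i a0) ab yac' yNc (v := b).
by rewrite ab lexx => /(_ isT); lra.
Qed.

Section PersistentClusters.
Variables (T0 : R) (k : nat) (C : 'I_k -> {set 'I_n}) (rep : 'I_k -> 'I_n).
Hypotheses (T0_ge0 : 0 <= T0) (rep_in : forall a : 'I_k, rep a \in C a)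
  (crit : forall a : 'I_k, critical_cluster tau y (C a) T0)
  (persist : forall (a : 'I_k) (T : R), T0 <= T -> is_cluster y (C a) T)
  (distinct : forall a b : 'I_k, a != b -> forall T : R, T0 <= T ->
      forall i j, i \in C a -> j \in C b -> pos (y i T) != pos (y j T)).

Definition enters (a : 'I_k) (u : R) :=
  [/\ T0 <= u, pos (y (rep a) u) = s & rt (rep a) u = 1].

Lemma rep_pos_neq (a b : 'I_k) (T : R) : a != b -> T0 <= T ->
  pos (y (rep a) T) != pos (y (rep b) T).
Proof. by move=> ab hT; apply: distinct (rep_in a) (rep_in b). Qed.

Lemma cluster_pos (a : 'I_k) j (T : R) : j \in C a -> T0 <= T ->
  pos (y j T) = pos (y (rep a) T).
Proof. by move=> jC hT; have [_ H] := persist a hT; apply: H. Qed.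

Lemma entries_separated (a b : 'I_k) u v : a != b -> enters a u -> enters b v ->
  u <= v -> u + (t - s) <= v.
Proof.
move=> ab [ua pa ra] [vb pb rb] uv; rewrite leNgt; apply/negP => vlt.
(* [lra] does not use section hypotheses, so they are moved into the context. *)
move: (s_ge0) (ht1) => s0 t1.
have [uv'|] := ltrP u v; last first.
  move=> vu; have E : v = u by lra.
  by move: (rep_pos_neq ab ua); rewrite pa -E pb eqxx.
have u0 : 0 <= u := le_trans T0_ge0 ua.
have pv : pos (y (rep a) v) = s + (v - u).
  by rewrite (traj_free_cycle u0 pa ra) ?posD ?pa //; [lra | lra | apply/andP; split; lra].
(* At time [v] the whole cluster [a] is strictly inside S, so [b] is blocked. *)
have inS : (#|C a| <= nS s t y v)%N.
  rewrite /nS; apply: subset_leq_card; apply/fintype.subsetP => j jC; rewrite inE.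
  by rewrite (cluster_pos jC) ?pv; [apply/andP; split; lra | lra].
have bl : blocked tau s t y (rep b) v.
  by rewrite /blocked pb eqxx /=; apply: le_trans (crit a).2 _; rewrite ler_nat.
by move: rb; rewrite /rate bl => /eqP; rewrite eq_sym oner_eq0.
Qed.

Lemma rep_gap_notin_int (a b : 'I_k) (T : R) (m : int) : a != b -> T0 <= T ->
  y (rep a) T - y (rep b) T != m%:~R.
Proof.
move=> ab hT; apply: contra (rep_pos_neq ab hT) => /eqP gap.
by rewrite -[y (rep a) T](subrK (y (rep b) T)) gap addrC posDz.
Qed.

Lemma enters_within_period (a b : 'I_k) e : enters a e ->
  exists2 u, e <= u < e + 1 & enters b u.
Proof.
move=> [ea pa ra]; have [<-|ab] := eqVneq a b.
  by exists e; [rewrite lexx; lra | split].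
have e0 : 0 <= e := le_trans T0_ge0 ea.
have ee1 : e <= e + 1 by lra.
pose g v := y (rep a) v - y (rep b) v; pose m := Num.floor (g e).
have cg : cont_on e (e + 1) g := cont_onB (traj_cont_on _ e0) (traj_cont_on _ e0).
have gNint v (z : int) : e <= v <= e + 1 -> g v != z%:~R.
  by move=> /andP[ev _]; apply: rep_gap_notin_int; rewrite // (le_trans ea).
have gm : m%:~R < g e by rewrite lt_neqAle eq_sym gNint ?floor_le // lexx.
have gm1 : g e < (m + 1)%:~R := floorD1_gt (g e).
have ee1' : e <= e + 1 <= e + 1 by rewrite ee1 lexx.
(* The gap [g] cannot leave [(m, m + 1)] while [a] runs through a full period,
   which forces [b] across [y (rep a) e - m], a lift of [s]. *)
have ge1 : m%:~R < g (e + 1) < (m + 1)%:~R.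
  rewrite (cont_on_lt cg ee1 gm1 (fun v vi => gNint v _ vi)) // andbT.
  rewrite -ltrN2 -intrN (cont_on_lt (cont_onN cg) ee1) // ?intrN ?ltrN2 //.
  by move=> v vi; rewrite -intrN eqr_oppLR -intrN gNint.
have ya1 := traj_free_cycle e0 pa ra ee1'.
have lo : y (rep b) e <= y (rep a) e - m%:~R by move: gm; rewrite /g; lra.
have hi : y (rep a) e - m%:~R < y (rep b) (e + 1).
  by move: ge1; rewrite /g ya1 intrD => /andP[_]; lra.
have [u [eu ue yu ru]] := traj_enters e0 ee1 lo hi.
exists u; first by rewrite eu.
by split; rewrite // ?yu -?intrN ?posDz //; lra.
Qed.

Lemma idle_cluster_parks (a : 'I_k) : (forall u, ~ enters a u) ->
  pos (y (rep a) (T0 + 1)) = s.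
Proof.
move=> idle; have [d /andP[d0 d1] pd] := traj_reaches_s (rep a) T0_ge0.
have Td0 : 0 <= T0 + d by have := T0_ge0; lra.
have Td1 : T0 + d <= T0 + 1 by lra.
have stuck u : T0 + d <= u < T0 + 1 ->
    y (rep a) u = y (rep a) (T0 + d) + (u - (T0 + d)) * 0 -> rt (rep a) u = 0.
  rewrite mulr0 addr0 => /andP[du _] yu; case: (rate01 (rep a) u) => // ru.
  by exfalso; apply: (idle u); split; rewrite ?yu //; lra.
by rewrite (traj_affine Td0 Td1 stuck) ?mulr0 ?addr0 // Td1 lexx.
Qed.

Lemma some_cluster_enters : (1 < k)%N -> exists (a : 'I_k) e, enters a e.
Proof.
move=> k1; apply: contrapT => none.
have idle (a : 'I_k) u : ~ enters a u by move=> hau; apply: none; exists a, u.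
have T01 : T0 <= T0 + 1 by lra.
have := @rep_pos_neq (Ordinal (ltnW k1)) (Ordinal k1) _ isT T01.
by rewrite !idle_cluster_parks ?eqxx.
Qed.

Lemma entry_spread_lt1 : (k.-1)%:R * (t - s) < 1.
Proof.
have [k1|k1] := leqP k 1; first by rewrite (_ : k.-1 = 0)%N ?mul0r //; lia.
have [a0 [e0 he0]] := some_cluster_enters k1.
have [f hf] : exists f : 'I_k -> R, forall X, e0 <= f X < e0 + 1 /\ enters X (f X).
  apply: (fin_all_exists (U := fun _ => R)
    (P := fun X u => e0 <= u < e0 + 1 /\ enters X u)) => X.
  by have [u ue hu] := enters_within_period X he0; exists u.
have sep (X Y : 'I_k) : X \in [set: 'I_k] -> Y \in [set: 'I_k] -> X != Y ->
    f X <= f Y -> f X + (t - s) <= f Y.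
  by move=> _ _ XY; apply: entries_separated XY (hf X).2 (hf Y).2.
have cT : #|[set: 'I_k]| = (k.-1).+1 by rewrite cardsT card_ord prednK // ltnW.
have [X _] := separated_spread cT (fun X _ => proj1 (andP (hf X).1)) sep.
by have := (hf X).1; lra.
Qed.
End PersistentClusters.
End Trajectory.

Theorem mainTheorem3 (R : realType) (n : nat) (tau r s t : R)
  (y : 'I_n -> R -> R)
  (hr : 0 <= r) (hrs : r < s) (hst : s < t) (ht1 : t <= 1) (htau : 0 < tau)
  (traj : blocking_traj tau s t y)
  (T0 : R) (hT0 : 0 <= T0) (k : nat) (C : 'I_k -> {set 'I_n})
  (crit : forall a : 'I_k, critical_cluster tau y (C a) T0)
  (persist : forall (a : 'I_k) (T : R), T0 <= T -> is_cluster y (C a) T)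
  (distinct : forall (a b : 'I_k), a != b -> forall T : R, T0 <= T ->
      forall i j : 'I_n, i \in C a -> j \in C b -> pos (y i T) != pos (y j T)) :
  (k%:Z <= Num.ceil ((t - s)^-1))%R.
Proof.
have s_ge0 : 0 <= s by lra.
have [rep rep_in] : exists rep : 'I_k -> 'I_n, forall a, rep a \in C a.
  apply: (fin_all_exists (U := fun _ => 'I_n) (P := fun a i => i \in C a)) => a.
  by have [[/set0Pn ne _] _] := crit a.
apply: nat_le_ceil_inv; first lra.
exact: (entry_spread_lt1 s_ge0 hst ht1 traj hT0 rep_in crit persist distinct).
Qed.
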